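(* Let $\partial:\mathcal{F}\to C(G)$ be a derivation such that $(\partial f)\circ\varphi=\partial(f\circ\varphi)$ for all $f\in\mathcal F$. Then there exists a unique derivation $\delta_\partial:\mathcal{B}\to B$ such that $\delta_\partial(V)=0$ and $\delta_\partial(M_f)=M_{\partial f}$ for all $f\in\mathcal F$; moreover $\delta_\partial$ is invariant.
   Context: Setup: $G$ is an infinite compact (Hausdorff) abelian group, written additively, and $x_1\in G$ generates a dense cyclic subgroup; $x_n=nx_1$, $\varphi(x)=x+x_1$. $\widehat G$ is the group of continuous characters and $\mathcal{F}$ is their linear span in $C(G)$ (a $\varphi$-stable algebra). Let $H=\ell^2(\mathbb{Z})$ with canonical basis $\{E_l\}$; $VE_l=E_{l+1}$, $M_fE_l=f(x_l)E_l$, $\mathbb{L}E_l=lE_l$. $B=C^*(V,M_f:f\in C(G))$ (isomorphic to the crossed product $C(G)\rtimes_\varphi\mathbb Z$), and $\mathcal{B}$ is the $*$-subalgebra generated by $V,V^{-1},M_\chi$ ($\chi\in\widehat G$). A derivation is a linear map satisfying the Leibniz rule; $\delta:\mathcal B\to B$ is invariant if $e^{-i\theta\mathbb L}\delta(e^{i\theta\mathbb L}be^{-i\theta\mathbb L})e^{i\theta\mathbb L}=\delta(b)$ for all $\theta\in\mathbb R$, $b\in\mathcal B$. *)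

From HB Require Import structures.
From mathcomp Require Import all_boot all_order all_algebra.
From mathcomp Require Import all_classical all_reals all_analysis.
From mathcomp Require Import complex.
Import Order.TTheory GRing.Theory Num.Theory.
Import numFieldTopology.Exports numFieldNormedType.Exports.

Set Implicit Arguments.
Unset Strict Implicit.
Unset Printing Implicit Defensive.

Local Open Scope ring_scope.
Local Open Scope complex_scope.
Local Open Scope classical_set_scope.

(* The complex numbers C = R[i], seen as a numClosedFieldType so that
   MathComp-Analysis equips it with its norm topology. *)
Definition CC (R : realType) : numClosedFieldType := R[i].

Definition expi (R : realType) (t : R) : CC R := (cos t +i* sin t).

Definition is_char (R : realType) (G : topologicalZmodType) (chi : G -> CC R) :=
  [/\ continuous chi,
      (forall x y : G, chi (x + y) = chi x * chi y) &
      (forall x : G, `|chi x| = 1)].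

Definition Fspan (R : realType) (G : topologicalZmodType) (f : G -> CC R) :=
  exists s : seq (CC R * (G -> CC R)),
    (forall p, p \in s -> is_char p.2) /\
    f = (fun x => \sum_(p <- s) p.1 * p.2 x).

Definition phiG (G : topologicalZmodType) (x1 : G) : G -> G := fun x => x + x1.

Definition is_F_derivation (R : realType) (G : topologicalZmodType)
    (d : (G -> CC R) -> (G -> CC R)) :=
  [/\ (forall f, Fspan f -> continuous (d f)),
      (forall (c : CC R) f g, Fspan f -> Fspan g ->
          d (fun x => c * f x + g x) = (fun x => c * d f x + d g x)) &
      (forall f g, Fspan f -> Fspan g ->
          d (fun x => f x * g x) = (fun x => d f x * g x + f x * d g x))].

(* A (bounded) operator T on H = l^2(Z) is represented by its matrix
   T k l = < E_k , T E_l >  w.r.t. the canonical basis {E_l}. *)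
Definition op (R : realType) := int -> int -> CC R.

Definition op0 (R : realType) : op R := fun _ _ => 0.
Definition opadd (R : realType) (S T : op R) : op R := fun k l => S k l + T k l.
Definition opscale (R : realType) (c : CC R) (T : op R) : op R :=
  fun k l => c * T k l.
Definition opsub (R : realType) (S T : op R) : op R := fun k l => S k l - T k l.
Definition opadj (R : realType) (T : op R) : op R := fun k l => (T l k)^*.

Definition zwin (N : nat) : seq int :=
  [seq (i%:Z - N%:Z)%R | i <- iota 0 (N.*2).+1].

(* composition: (S T) k l = sum_m S k m * T m l  (limit of symmetric partial
   sums; this series converges absolutely whenever S and T are bounded) *)
Definition opmul (R : realType) (S T : op R) : op R :=
  fun k l => limn (fun N : nat => \sum_(m <- zwin N) S k m * T m l).

(* ||T|| <= e : for every finitely supported vector u, ||T u|| <= e ||u||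
   (finitely supported vectors are dense in l^2(Z)). *)
Definition opnorm_le (R : realType) (T : op R) (e : CC R) :=
  forall (u : int -> CC R) (N K : nat),
    (forall l : int, l \notin zwin N -> u l = 0) ->
    \sum_(k <- zwin K) `| \sum_(l <- zwin N) T k l * u l | ^+ 2
      <= e ^+ 2 * \sum_(l <- zwin N) `|u l| ^+ 2.

Definition Vop (R : realType) : op R := fun k l => (k == l + 1)%:R.
Definition Vinvop (R : realType) : op R := fun k l => (k + 1 == l)%:R.
Definition Mop (R : realType) (G : topologicalZmodType) (x1 : G) (f : G -> CC R)
  : op R := fun k l => (k == l)%:R * f (x1 *~ l).
Definition Uop (R : realType) (theta : R) : op R :=
  fun k l => (k == l)%:R * expi (theta * l%:~R).

Definition star_alg_closed (R : realType) (S : set (op R)) :=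
  [/\ (forall a b, S a -> S b -> S (opadd a b)),
      (forall c a, S a -> S (opscale c a)),
      (forall a b, S a -> S b -> S (opmul a b)) &
      (forall a, S a -> S (opadj a))].

Definition norm_closed (R : realType) (S : set (op R)) :=
  forall T : op R,
    (forall e : CC R, 0 < e -> exists A, S A /\ opnorm_le (opsub T A) e) -> S T.

Definition Bset (R : realType) (G : topologicalZmodType) (x1 : G) : set (op R) :=
  fun T => forall S : set (op R),
    star_alg_closed S -> norm_closed S -> S (Vop R) ->
    (forall f : G -> CC R, continuous f -> S (Mop x1 f)) -> S T.

Definition Bcal (R : realType) (G : topologicalZmodType) (x1 : G) : set (op R) :=
  fun T => forall S : set (op R),
    star_alg_closed S -> S (Vop R) -> S (Vinvop R) ->
    (forall chi : G -> CC R, is_char chi -> S (Mop x1 chi)) -> S T.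

Definition is_B_derivation (R : realType) (G : topologicalZmodType) (x1 : G)
    (delta : op R -> op R) :=
  [/\ (forall b, Bcal x1 b -> Bset x1 (delta b)),
      (forall (c : CC R) a b, Bcal x1 a -> Bcal x1 b ->
          delta (opadd (opscale c a) b) = opadd (opscale c (delta a)) (delta b)) &
      (forall a b, Bcal x1 a -> Bcal x1 b ->
          delta (opmul a b) = opadd (opmul (delta a) b) (opmul a (delta b)))].

Definition is_invariant (R : realType) (G : topologicalZmodType) (x1 : G)
    (delta : op R -> op R) :=
  forall (theta : R) (b : op R), Bcal x1 b ->
    opmul (opmul (Uop (- theta)) (delta (opmul (opmul (Uop theta) b) (Uop (- theta)))))
          (Uop theta)
    = delta b.

From HB Require Import structures.
From mathcomp Require Import all_boot all_order all_algebra.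
From mathcomp Require Import all_classical all_reals all_analysis.
From mathcomp Require Import complex zify lra.
Import Order.TTheory GRing.Theory Num.Theory.
Import numFieldTopology.Exports numFieldNormedType.Exports.

Set Implicit Arguments.
Unset Strict Implicit.
Unset Printing Implicit Defensive.

Local Open Scope ring_scope.
Local Open Scope classical_set_scope.

(* Every b in the *-algebra generated by V, V^-1 and the M_chi is banded, and its
   n-th diagonal is a function F_n of the span of the characters sampled along
   the orbit: b E_l = sum_n F_n(x_(l+n)) E_(l+n).  As the orbit is dense and the
   F_n are continuous, b determines the F_n, so delta_d may act diagonal by
   diagonal, F_n |-> d F_n.  The Leibniz rule for products reduces to that of d
   together with d commuting with the translations by x_j, which follows from
   (d f) o phi = d (f o phi).  Conjugation by e^(i theta L) multiplies the n-th
   diagonal by e^(i theta n), a scalar that d lets through: hence invariance.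
   Uniqueness: two derivations vanishing on V (hence on V^-1) and agreeing on the
   M_chi agree on the generated *-algebra. *)

Section OperatorMatrices.
Variable R : realType.
Implicit Types (S T X : op R) (u : int -> CC R) (k l m n : int).

Lemma mem_zwin m (N : nat) : (m \in zwin N) = (- N%:Z <= m <= N%:Z).
Proof.
apply/mapP/idP => [ [j] | /andP [h1 h2] ].
  by rewrite mem_iota add0n => /andP [_ hj] ->; apply/andP; split; lia.
by exists (absz (m + N%:Z)); [rewrite mem_iota add0n leq0n /=|]; lia.
Qed.

Lemma zwin_uniq (N : nat) : uniq (zwin N).
Proof. by rewrite map_inj_uniq ?iota_uniq // => i j /addIr []. Qed.

Lemma zwin_subset (M N : nat) : (M <= N)%N -> {subset zwin M <= zwin N}.
Proof. by move=> MN m; rewrite !mem_zwin; lia. Qed.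

Lemma big_zwin_supp (F : int -> CC R) (W : seq int) (N : nat) :
  uniq W -> (forall m, m \notin W -> F m = 0) -> {subset W <= zwin N} ->
  \sum_(m <- zwin N) F m = \sum_(m <- W) F m.
Proof.
move=> uW FW WN; rewrite (bigID (mem W)) /= [X in _ + X]big1 ?addr0; last first.
  by move=> m /FW.
rewrite -big_filter; apply/perm_big/uniq_perm => //.
  by rewrite filter_uniq ?zwin_uniq.
by move=> m; rewrite mem_filter; case: (boolP (m \in W)) => //= /WN.
Qed.

Lemma limn_zwin_supp (F : int -> CC R) (M : nat) :
  (forall m, m \notin zwin M -> F m = 0) ->
  limn (fun N : nat => \sum_(m <- zwin N) F m) = \sum_(m <- zwin M) F m.
Proof.
move=> FM; apply: (lim_near_cst (@norm_hausdorff _ _)); near=> N.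
apply: big_zwin_supp => //; first exact: zwin_uniq.
by apply: zwin_subset; near: N; exact: nbhs_infty_ge.
Unshelve. all: by end_near.
Qed.

Lemma op_ext S T : (forall k l, S k l = T k l) -> S = T.
Proof. by move=> ST; apply/funext => k; apply/funext => l. Qed.

Lemma opmul_supp S T k l (M : nat) :
  (forall m, m \notin zwin M -> S k m * T m l = 0) ->
  opmul S T k l = \sum_(m <- zwin M) S k m * T m l.
Proof. exact: limn_zwin_supp. Qed.

Lemma opmul_supp1 S T k l m0 :
  (forall m, m != m0 -> S k m * T m l = 0) -> opmul S T k l = S k m0 * T m0 l.
Proof.
move=> ST; rewrite (@opmul_supp _ _ _ _ (absz m0)); last first.
  by move=> m m0m; apply: ST; apply: contraNneq m0m => ->; rewrite mem_zwin; lia.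
rewrite (@big_zwin_supp _ [:: m0]) ?big_seq1 //.
  by move=> m; rewrite inE => /ST.
by move=> m; rewrite inE => /eqP ->; rewrite mem_zwin; lia.
Qed.

Definition banded (B : nat) T := forall k l, k - l \notin zwin B -> T k l = 0.

Lemma opmul_bandedl (B : nat) S T k l : banded B S ->
  opmul S T k l = \sum_(j <- zwin B) S k (k - j) * T (k - j) l.
Proof.
move=> bS; rewrite (@opmul_supp _ _ _ _ (B + absz k)); last first.
  by move=> m km; rewrite bS ?mul0r //; apply: contra km; rewrite !mem_zwin; lia.
rewrite (@big_zwin_supp _ [seq k - j | j <- zwin B]) ?big_map //.
- by rewrite map_inj_uniq ?zwin_uniq // => i j /addrI /oppr_inj.
- move=> m km; rewrite bS ?mul0r //; apply: contra km => kmB.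
  by apply/mapP; exists (k - m); rewrite // opprB addrC subrK.
- by move=> m /mapP [j jB ->]; move: jB; rewrite !mem_zwin; lia.
Qed.

Definition diagop u : op R := fun k l => (k == l)%:R * u l.

Lemma opmul_diagl u X k l : opmul (diagop u) X k l = u k * X k l.
Proof.
rewrite (@opmul_supp1 _ _ _ _ k) /diagop ?eqxx ?mul1r // => m km.
by rewrite eq_sym (negbTE km) !mul0r.
Qed.

Lemma opmul_diagr u X k l : opmul X (diagop u) k l = X k l * u l.
Proof.
rewrite (@opmul_supp1 _ _ _ _ l) /diagop ?eqxx ?mul1r // => m ml.
by rewrite (negbTE ml) mul0r mulr0.
Qed.

Lemma opmul_Vl X k l : opmul (Vop R) X k l = X (k - 1) l.
Proof.
rewrite (@opmul_supp1 _ _ _ _ (k - 1)) /Vop ?subrK ?eqxx ?mul1r // => m km.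
suff /negbTE -> : k != m + 1 by rewrite mul0r.
by apply: contra km => /eqP ->; rewrite addrK.
Qed.

Lemma opmul_Vinvl X k l : opmul (Vinvop R) X k l = X (k + 1) l.
Proof.
rewrite (@opmul_supp1 _ _ _ _ (k + 1)) /Vinvop ?eqxx ?mul1r // => m km.
by rewrite eq_sym (negbTE km) mul0r.
Qed.

Definition shiftop (n : int) : op R := fun k l => (k - l == n)%:R.

Lemma Vop_shiftop : Vop R = shiftop 1.
Proof. by apply: op_ext => k l; rewrite /Vop /shiftop; congr (_ %:R); apply/eqP/eqP; lia. Qed.

Lemma Vinvop_shiftop : Vinvop R = shiftop (-1).
Proof. by apply: op_ext => k l; rewrite /Vinvop /shiftop; congr (_ %:R); apply/eqP/eqP; lia. Qed.

Lemma opmul_V_shiftop n : opmul (Vop R) (shiftop n) = shiftop (n + 1).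
Proof.
by apply: op_ext => k l; rewrite opmul_Vl /shiftop; congr (_ %:R); apply/eqP/eqP; lia.
Qed.

Lemma opmul_Vinv_shiftop n : opmul (Vinvop R) (shiftop n) = shiftop (n - 1).
Proof.
by apply: op_ext => k l; rewrite opmul_Vinvl /shiftop; congr (_ %:R); apply/eqP/eqP; lia.
Qed.

Definition op1 : op R := diagop (fun _ => 1).

Lemma opmul_V_Vinv : opmul (Vop R) (Vinvop R) = op1.
Proof.
rewrite Vinvop_shiftop opmul_V_shiftop; apply: op_ext => k l.
by rewrite /op1 /diagop /shiftop mulr1; congr (_ %:R); apply/eqP/eqP; lia.
Qed.

Lemma opmul1l X : opmul op1 X = X.
Proof. by apply: op_ext => k l; rewrite opmul_diagl mul1r. Qed.

Lemma opmul1r X : opmul X op1 = X.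
Proof. by apply: op_ext => k l; rewrite opmul_diagr mulr1. Qed.

Lemma opmul0l X : opmul (op0 R) X = op0 R.
Proof.
by apply: op_ext => k l; rewrite (@opmul_supp1 _ _ _ _ 0) /op0 ?mul0r // => m _; rewrite mul0r.
Qed.

Lemma opadj_mul (B : nat) S T : banded B S ->
  opadj (opmul S T) = opmul (opadj T) (opadj S).
Proof.
move=> bS; apply: op_ext => k l; rewrite /opadj.
have Sl0 m : m \notin zwin (B + absz l) -> S l m = 0.
  by move=> lm; apply: bS; apply: contra lm; rewrite !mem_zwin; lia.
rewrite (@opmul_supp _ _ _ _ (B + absz l)); last by move=> m /Sl0 ->; rewrite mul0r.
rewrite (@opmul_supp _ _ _ _ (B + absz l)); last by move=> m /Sl0 ->; rewrite conjc0 mulr0.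
by rewrite rmorph_sum; apply: eq_bigr => m _; rewrite rmorphM mulrC.
Qed.

Lemma opadj_add S T : opadj (opadd S T) = opadd (opadj S) (opadj T).
Proof. by apply: op_ext => k l; rewrite /opadj /opadd rmorphD. Qed.

Lemma opadj_scale c T : opadj (opscale c T) = opscale c^*%C (opadj T).
Proof. by apply: op_ext => k l; rewrite /opadj /opscale rmorphM. Qed.

Lemma opadjK T : opadj (opadj T) = T.
Proof. by apply: op_ext => k l; rewrite /opadj conjcK. Qed.

Lemma opadj_diag u : opadj (diagop u) = diagop (fun l => (u l)^*%C).
Proof.
apply: op_ext => k l; rewrite /opadj /diagop.
by case: (eqVneq k l) => [->|kl]; rewrite ?mul1r // !mul0r conjc0.
Qed.

Lemma opadj_V : opadj (Vop R) = Vinvop R.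
Proof. by apply: op_ext => k l; rewrite /opadj /Vop /Vinvop conjc_nat eq_sym. Qed.

Lemma opscale1 T : opscale 1 T = T.
Proof. by apply: op_ext => k l; rewrite /opscale mul1r. Qed.

Lemma opscale0 T : opscale 0 T = op0 R.
Proof. by apply: op_ext => k l; rewrite /opscale mul0r. Qed.

Lemma opadd0 T : opadd T (op0 R) = T.
Proof. by apply: op_ext => k l; rewrite /opadd /op0 addr0. Qed.

Lemma opadd_eq_idem T : opadd T T = T -> T = op0 R.
Proof.
move=> TT; apply: op_ext => k l; have /eqP := congr1 (fun X => X k l) TT.
by rewrite /opadd /op0 -subr_eq0 addrK => /eqP.
Qed.

End OperatorMatrices.

Section CharacterSpan.
Variables (R : realType) (G : topologicalZmodType).
Implicit Types (f g chi psi : G -> CC R) (c : CC R).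

Lemma is_char1 : is_char (fun _ : G => (1 : CC R)).
Proof. by split=> [x|x y|x]; rewrite ?mulr1 ?normr1 //; exact: cst_continuous. Qed.

Lemma is_charM chi psi : is_char chi -> is_char psi -> is_char (fun x => chi x * psi x).
Proof.
case=> c1 m1 n1 [c2 m2 n2]; split=> [x|x y|x].
- by apply: continuousM; [exact: c1|exact: c2].
- by rewrite m1 m2 mulrACA.
- by rewrite normrM n1 n2 mulr1.
Qed.

Lemma is_charJ chi : is_char chi -> is_char (fun x => (chi x)^*%C).
Proof.
case=> c1 m1 n1.
have -> : (fun x => (chi x)^*%C) = (fun x => (chi x)^-1).
  by apply/funext => x; rewrite (invc_norm (chi x)) -/(CC R) n1 expr1n invr1 mul1r.
split=> [x|x y|x]; last by rewrite normfV n1 invr1.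
- by apply: continuousV; [rewrite -normr_eq0 n1 oner_eq0|exact: c1].
- by rewrite m1 invfM.
Qed.

Lemma Fspan0 : Fspan (fun _ : G => (0 : CC R)).
Proof. by exists [::]; split => //; apply/funext => x; rewrite big_nil. Qed.

Lemma Fspan_char chi : is_char chi -> Fspan chi.
Proof.
move=> chiC; exists [:: (1, chi)]; split; first by move=> p; rewrite inE => /eqP ->.
by apply/funext => x; rewrite big_seq1 mul1r.
Qed.

Lemma FspanD f g : Fspan f -> Fspan g -> Fspan (fun x => f x + g x).
Proof.
move=> [s [sC ->]] [t [tC ->]]; exists (s ++ t); split; last first.
  by apply/funext => x; rewrite big_cat.
by move=> p; rewrite mem_cat => /orP [/sC|/tC].
Qed.

Lemma FspanZ c f : Fspan f -> Fspan (fun x => c * f x).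
Proof.
move=> [s [sC ->]]; exists [seq (c * p.1, p.2) | p <- s]; split.
  by move=> p /mapP [q /sC qC ->].
by apply/funext => x; rewrite big_map mulr_sumr; apply: eq_bigr => p _; rewrite mulrA.
Qed.

Lemma FspanC c : Fspan (fun _ : G => c).
Proof. by have := FspanZ c (Fspan_char is_char1); under eq_fun do rewrite mulr1. Qed.

Lemma FspanM f g : Fspan f -> Fspan g -> Fspan (fun x => f x * g x).
Proof.
move=> [s [sC ->]] [t [tC ->]].
exists [seq (p.1 * q.1, fun x => p.2 x * q.2 x) | p <- s, q <- t]; split.
  by move=> r /allpairsP [[p q] [/= /sC pC /tC qC ->]]; exact: is_charM.
apply/funext => x; rewrite big_allpairs_dep mulr_suml; apply: eq_bigr => p _.
by rewrite mulr_sumr; apply: eq_bigr => q _; rewrite mulrACA.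
Qed.

Lemma FspanJ f : Fspan f -> Fspan (fun x => (f x)^*%C).
Proof.
move=> [s [sC ->]]; exists [seq ((p.1)^*%C, fun x => (p.2 x)^*%C) | p <- s]; split.
  by move=> p /mapP [q /sC qC ->]; exact: is_charJ.
by apply/funext => x; rewrite big_map rmorph_sum; apply: eq_bigr => p _; rewrite rmorphM.
Qed.

(* A translate of a character is a scalar multiple of it. *)
Lemma Fspan_translate f a : Fspan f -> Fspan (fun x => f (x + a)).
Proof.
move=> [s [sC ->]]; exists [seq (p.1 * p.2 a, p.2) | p <- s]; split.
  by move=> p /mapP [q /sC qC ->].
apply/funext => x; rewrite big_map; apply: eq_big_seq => p /sC [_ m _] /=.
by rewrite m mulrA mulrAC.
Qed.

Lemma Fspan_sum (I : eqType) (r : seq I) (F : I -> G -> CC R) :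
  (forall i, i \in r -> Fspan (F i)) -> Fspan (fun x => \sum_(i <- r) F i x).
Proof.
elim: r => [|i r IHr] Fr; first by under eq_fun do rewrite big_nil; exact: Fspan0.
under eq_fun do rewrite big_cons.
apply: FspanD; first by apply: Fr; rewrite mem_head.
by apply: IHr => j jr; apply: Fr; rewrite in_cons jr orbT.
Qed.

Lemma Fspan_continuous f : Fspan f -> continuous f.
Proof.
move=> [s [sC ->]]; elim: s sC => [|p s IHs] sC.
  by under eq_fun do rewrite big_nil; exact: cst_continuous.
under eq_fun do rewrite big_cons.
have [pC _ _] := sC p (mem_head _ _).
move=> x; apply: cvgD; first exact: cvgM (cvg_cst _) (pC x).
by apply: IHs => q qs; apply: sC; rewrite in_cons qs orbT.
Qed.

End CharacterSpan.

Section Orbit.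
Variables (R : realType) (G : topologicalZmodType) (x1 : G).
Hypothesis x1_dense : closure (range (fun n : int => x1 *~ n)) = [set: G].

Lemma orbit_continuous_eq0 (h : G -> CC R) : continuous h ->
  (forall k : int, h (x1 *~ k) = 0) -> h = fun _ => 0.
Proof.
move=> hC h0; apply/funext => x; apply/eqP/negPn/negP => hx.
have : closure (range (fun n : int => x1 *~ n)) x by rewrite x1_dense.
case/(_ [set y | `|h x - h y| < `|h x|]).
  by apply: (@cvgr_dist_lt _ _ _ (nbhs x) _ h (h x) (hC x)); rewrite normr_gt0.
by move=> y [[n _ <-]] /=; rewrite h0 subr0 ltxx.
Qed.

Lemma Fspan_orbit_inj (f g : G -> CC R) : Fspan f -> Fspan g ->
  (forall k : int, f (x1 *~ k) = g (x1 *~ k)) -> f = g.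
Proof.
move=> fF gF fg.
have fg0 : (fun x => f x - g x) = fun _ => 0.
  apply: orbit_continuous_eq0 => [x|k]; last by rewrite fg subrr.
  by apply: cvgB; [exact: Fspan_continuous fF x|exact: Fspan_continuous gF x].
by apply/funext => x; apply/eqP; rewrite -subr_eq0; apply/eqP/(congr1 (@^~ x) fg0).
Qed.

End Orbit.

Section FDerivation.
Variables (R : realType) (G : topologicalZmodType) (d : (G -> CC R) -> G -> CC R).
Hypothesis d_der : is_F_derivation d.
Implicit Types (f g : G -> CC R) (c : CC R).

Lemma d_continuous f : Fspan f -> continuous (d f).
Proof. by case: d_der => dC _ _; exact: dC. Qed.

Lemma d_linear c f g : Fspan f -> Fspan g ->
  d (fun x => c * f x + g x) = (fun x => c * d f x + d g x).
Proof. by case: d_der => _ dL _; exact: dL. Qed.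

Lemma dM f g : Fspan f -> Fspan g ->
  d (fun x => f x * g x) = (fun x => d f x * g x + f x * d g x).
Proof. by case: d_der => _ _ dM; exact: dM. Qed.

Lemma d0 : d (fun _ => 0) = (fun _ => 0).
Proof.
have := d_linear 1 (Fspan0 R G) (Fspan0 R G); under eq_fun do rewrite mulr0 addr0.
move=> d00; apply/funext => x; have /eqP := congr1 (@^~ x) d00.
by rewrite mul1r eq_sym -subr_eq0 addrK => /eqP.
Qed.

Lemma dD f g : Fspan f -> Fspan g -> d (fun x => f x + g x) = (fun x => d f x + d g x).
Proof.
move=> fF gF; have := d_linear 1 fF gF; under eq_fun do rewrite mul1r.
by move=> ->; apply/funext => x; rewrite mul1r.
Qed.

Lemma dZ c f : Fspan f -> d (fun x => c * f x) = (fun x => c * d f x).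
Proof.
move=> fF; have := d_linear c fF (Fspan0 R G); under eq_fun do rewrite addr0.
by rewrite d0 => ->; apply/funext => x; rewrite addr0.
Qed.

Lemma d_sum (I : eqType) (r : seq I) (F : I -> G -> CC R) :
  (forall i, i \in r -> Fspan (F i)) ->
  d (fun x => \sum_(i <- r) F i x) = (fun x => \sum_(i <- r) d (F i) x).
Proof.
elim: r => [|i r IHr] Fr.
  by under eq_fun do rewrite big_nil; rewrite d0; apply/funext => x; rewrite big_nil.
have Fi : Fspan (F i) by apply: Fr; rewrite mem_head.
have Fr' j : j \in r -> Fspan (F j) by move=> jr; apply: Fr; rewrite in_cons jr orbT.
under eq_fun do rewrite big_cons.
by rewrite dD ?IHr //; [apply/funext => x; rewrite big_cons | exact: Fspan_sum].
Qed.

Lemma dC c : d (fun _ => c) = (fun _ => 0).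
Proof.
have d1 : d (fun _ => 1) = (fun _ => 0).
  have := dM (FspanC G 1) (FspanC G 1); under eq_fun do rewrite mulr1.
  move=> d11; apply/funext => x; have /eqP := congr1 (@^~ x) d11.
  by rewrite mulr1 mul1r eq_sym -subr_eq0 addrK => /eqP.
have := dZ c (FspanC G 1); under eq_fun do rewrite mulr1.
by rewrite d1 => ->; apply/funext => x; rewrite mulr0.
Qed.

Definition commutes_translate (a : G) :=
  forall f, Fspan f -> d (fun x => f (x + a)) = (fun x => d f (x + a)).

Lemma commutes_translateD a b :
  commutes_translate a -> commutes_translate b -> commutes_translate (a + b).
Proof.
move=> da db f fF.
have -> : (fun x => f (x + (a + b))) = (fun x => (fun y => f (y + b)) (x + a)).
  by apply/funext => x; rewrite addrA.
rewrite (da (fun y => f (y + b))) ?db //; last exact: Fspan_translate.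
by apply/funext => x; rewrite addrA.
Qed.

Lemma commutes_translateN a : commutes_translate a -> commutes_translate (- a).
Proof.
move=> da f fF; have := da _ (Fspan_translate (- a) fF).
under eq_fun do rewrite /= addrK.
by move=> dfE; apply/funext => x; rewrite [in RHS]dfE /= subrK.
Qed.

Lemma commutes_translate_orbit (x1 : G) :
  (forall f, Fspan f -> d f \o phiG x1 = d (f \o phiG x1)) ->
  forall j : int, commutes_translate (x1 *~ j).
Proof.
move=> d_rot; have d1 : commutes_translate x1.
  by move=> f fF; have := d_rot f fF; rewrite /comp /phiG => ->.
elim/int_ind => [|n dn|n dn].
- move=> f fF; rewrite mulr0z.
  have -> : (fun x => f (x + 0)) = f by apply/funext => x; rewrite addr0.
  by apply/funext => x; rewrite addr0.
- by rewrite intS mulrzDr mulr1z; exact: commutes_translateD.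
- rewrite intS opprD mulrzDr mulrNz mulr1z.
  exact: commutes_translateD (commutes_translateN d1) dn.
Qed.

End FDerivation.

Section Symbols.
Variables (R : realType) (G : topologicalZmodType) (x1 : G).
Implicit Types (S T : op R) (F : int -> G -> CC R) (B : nat).

Definition symbol_of F T := forall k l, T k l = F (k - l) (x1 *~ k).

Definition Fbanded T := exists B, banded B T /\
  exists2 F, (forall n, Fspan (F n)) & symbol_of F T.

Lemma banded_add B1 B2 S T :
  banded B1 S -> banded B2 T -> banded (maxn B1 B2) (opadd S T).
Proof.
move=> bS bT k l kl; rewrite /opadd bS ?bT ?addr0 //; apply: contra kl; apply: zwin_subset; lia.
Qed.

Lemma banded_adj B T : banded B T -> banded B (opadj T).
Proof.
by move=> bT k l kl; rewrite /opadj bT ?conjc0 //; apply: contra kl; rewrite !mem_zwin; lia.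
Qed.

Lemma banded_mul B1 B2 S T : banded B1 S -> banded B2 T -> banded (B1 + B2) (opmul S T).
Proof.
move=> bS bT k l kl; rewrite (opmul_bandedl _ _ _ bS) big1_seq // => j /andP [_ jB].
by rewrite bT ?mulr0 //; apply: contra kl; move: jB; rewrite !mem_zwin; lia.
Qed.

Lemma symbol_add F1 F2 S T : symbol_of F1 S -> symbol_of F2 T ->
  symbol_of (fun n x => F1 n x + F2 n x) (opadd S T).
Proof. by move=> eS eT k l; rewrite /opadd eS eT. Qed.

Lemma symbol_scale c F T : symbol_of F T -> symbol_of (fun n x => c * F n x) (opscale c T).
Proof. by move=> eT k l; rewrite /opscale eT. Qed.

Lemma symbol_adj F T : symbol_of F T ->
  symbol_of (fun n x => (F (- n) (x + x1 *~ (- n)))^*%C) (opadj T).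
Proof.
move=> eT k l; rewrite /opadj eT opprB -mulrzDr.
by congr ((F _ (x1 *~ _))^*%C); rewrite addrC subrK.
Qed.

Lemma symbol_mul B F1 F2 S T : banded B S -> symbol_of F1 S -> symbol_of F2 T ->
  symbol_of (fun n x => \sum_(j <- zwin B) F1 j x * F2 (n - j) (x + x1 *~ (- j)))
            (opmul S T).
Proof.
move=> bS eS eT k l; rewrite (opmul_bandedl _ _ _ bS); apply: eq_bigr => j _.
rewrite eS eT -mulrzDr; congr (F1 _ _ * F2 _ _); first by rewrite opprB addrC subrK.
by rewrite addrAC.
Qed.

Lemma Fbanded_add S T : Fbanded S -> Fbanded T -> Fbanded (opadd S T).
Proof.
move=> [B1 [bS [F1 F1F eS]]] [B2 [bT [F2 F2F eT]]].
exists (maxn B1 B2); split; first exact: banded_add.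
by exists (fun n x => F1 n x + F2 n x); [move=> n; exact: FspanD|exact: symbol_add].
Qed.

Lemma Fbanded_scale c T : Fbanded T -> Fbanded (opscale c T).
Proof.
move=> [B [bT [F FF eT]]]; exists B; split; first by move=> k l kl; rewrite /opscale bT ?mulr0.
by exists (fun n x => c * F n x); [move=> n; exact: FspanZ|exact: symbol_scale].
Qed.

Lemma Fbanded_adj T : Fbanded T -> Fbanded (opadj T).
Proof.
move=> [B [bT [F FF eT]]]; exists B; split; first exact: banded_adj.
exists (fun n x => (F (- n) (x + x1 *~ (- n)))^*%C); last exact: symbol_adj.
by move=> n; apply/FspanJ/Fspan_translate.
Qed.

Lemma Fbanded_mul S T : Fbanded S -> Fbanded T -> Fbanded (opmul S T).
Proof.
move=> [B1 [bS [F1 F1F eS]]] [B2 [bT [F2 F2F eT]]].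
exists (B1 + B2)%N; split; first exact: banded_mul.
eexists; last exact: symbol_mul bS eS eT.
by move=> n; apply: Fspan_sum => j _; apply: FspanM => //; exact: Fspan_translate.
Qed.

Lemma Fbanded_shiftop (n0 : int) : Fbanded (shiftop R n0).
Proof.
exists (absz n0); split.
  by move=> k l kl; rewrite /shiftop; case: eqP kl => // ->; rewrite mem_zwin; lia.
by exists (fun n _ => (n == n0)%:R); [move=> n; exact: FspanC|].
Qed.

Lemma symbol_M f : symbol_of (fun n x => (n == 0)%:R * f x) (Mop x1 f).
Proof. by move=> k l; rewrite /Mop subr_eq0; case: eqP => [->|]; rewrite ?mul0r. Qed.

Lemma Fbanded_M f : Fspan f -> Fbanded (Mop x1 f).
Proof.
move=> fF; exists 0%N; split.
  by move=> k l kl; rewrite /Mop; case: eqP kl => [->|]; rewrite ?mul0r // subrr mem_zwin.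
by exists (fun n x => (n == 0)%:R * f x); [move=> n; exact: FspanZ|exact: symbol_M].
Qed.

Lemma Bcal_Fbanded T : Bcal x1 T -> Fbanded T.
Proof.
apply; first split.
- exact: Fbanded_add.
- exact: Fbanded_scale.
- exact: Fbanded_mul.
- exact: Fbanded_adj.
- by rewrite Vop_shiftop; exact: Fbanded_shiftop.
- by rewrite Vinvop_shiftop; exact: Fbanded_shiftop.
- by move=> chi /Fspan_char; exact: Fbanded_M.
Qed.

End Symbols.

Section GeneratedAlgebras.
Variables (R : realType) (G : topologicalZmodType) (x1 : G).
Implicit Types (S T : op R) (c : CC R) (chi : G -> CC R).

Lemma Bcal_closed : star_alg_closed (Bcal (R := R) x1).
Proof.
split=> [S T SB TB|c T TB|S T SB TB|T TB] Y Yc YV YVi YM; case: (Yc) => addY scaleY mulY adjY.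
- by apply: addY; [exact: SB|exact: TB].
- by apply: scaleY; exact: TB.
- by apply: mulY; [exact: SB|exact: TB].
- by apply: adjY; exact: TB.
Qed.

Lemma Bset_closed : star_alg_closed (Bset (R := R) x1).
Proof.
split=> [S T SB TB|c T TB|S T SB TB|T TB] Y Yc YN YV YM; case: (Yc) => addY scaleY mulY adjY.
- by apply: addY; [exact: SB|exact: TB].
- by apply: scaleY; exact: TB.
- by apply: mulY; [exact: SB|exact: TB].
- by apply: adjY; exact: TB.
Qed.

Lemma opadj_M (f : G -> CC R) : opadj (Mop x1 f) = Mop x1 (fun x => (f x)^*%C).
Proof. exact: opadj_diag. Qed.

Lemma Bcal_add S T : Bcal x1 S -> Bcal x1 T -> Bcal x1 (opadd S T).
Proof. by case: Bcal_closed => addB _ _ _; exact: addB. Qed.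

Lemma Bcal_scale c T : Bcal x1 T -> Bcal x1 (opscale c T).
Proof. by case: Bcal_closed => _ scaleB _ _; exact: scaleB. Qed.

Lemma Bcal_mul S T : Bcal x1 S -> Bcal x1 T -> Bcal x1 (opmul S T).
Proof. by case: Bcal_closed => _ _ mulB _; exact: mulB. Qed.

Lemma Bcal_adj T : Bcal x1 T -> Bcal x1 (opadj T).
Proof. by case: Bcal_closed => _ _ _ adjB; exact: adjB. Qed.

Lemma Bcal_V : Bcal x1 (Vop R).
Proof. by move=> Y _ YV _ _. Qed.

Lemma Bcal_Vinv : Bcal x1 (Vinvop R).
Proof. by move=> Y _ _ YVi _. Qed.

Lemma Bcal_M chi : is_char chi -> Bcal x1 (Mop x1 chi).
Proof. by move=> chiC Y _ _ _ YM; exact: YM. Qed.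

Lemma Bcal_op0 : Bcal x1 (op0 R).
Proof. by rewrite -(opscale0 (Vop R)); apply: Bcal_scale; exact: Bcal_V. Qed.

Lemma Bset_add S T : Bset x1 S -> Bset x1 T -> Bset x1 (opadd S T).
Proof. by case: Bset_closed => addB _ _ _; exact: addB. Qed.

Lemma Bset_scale c T : Bset x1 T -> Bset x1 (opscale c T).
Proof. by case: Bset_closed => _ scaleB _ _; exact: scaleB. Qed.

Lemma Bset_mul S T : Bset x1 S -> Bset x1 T -> Bset x1 (opmul S T).
Proof. by case: Bset_closed => _ _ mulB _; exact: mulB. Qed.

Lemma Bset_adj T : Bset x1 T -> Bset x1 (opadj T).
Proof. by case: Bset_closed => _ _ _ adjB; exact: adjB. Qed.

Lemma Bset_V : Bset x1 (Vop R).
Proof. by move=> Y _ _ YV _. Qed.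

Lemma Bset_Vinv : Bset x1 (Vinvop R).
Proof. by rewrite -opadj_V; apply: Bset_adj; exact: Bset_V. Qed.

Lemma Bset_M (f : G -> CC R) : continuous f -> Bset x1 (Mop x1 f).
Proof. by move=> fC Y _ _ _ YM; exact: YM. Qed.

Lemma Bset_op0 : Bset x1 (op0 R).
Proof. by rewrite -(opscale0 (Vop R)); apply: Bset_scale; exact: Bset_V. Qed.

Lemma Bset_sum (I : eqType) (r : seq I) (F : I -> op R) :
  (forall i, i \in r -> Bset x1 (F i)) -> Bset x1 (fun k l => \sum_(i <- r) F i k l).
Proof.
elim: r => [|i r IHr] Fr.
  have -> : (fun k l => \sum_(i <- [::]) F i k l) = op0 R.
    by apply: op_ext => k l; rewrite big_nil.
  exact: Bset_op0.
have -> : (fun k l => \sum_(j <- i :: r) F j k l) =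
          opadd (F i) (fun k l => \sum_(j <- r) F j k l).
  by apply: op_ext => k l; rewrite big_cons.
apply: Bset_add; first by apply: Fr; rewrite mem_head.
by apply: IHr => j jr; apply: Fr; rewrite in_cons jr orbT.
Qed.

Lemma Bset_shiftop (n : int) : Bset x1 (shiftop R n).
Proof.
elim/int_ind: n => [|n Bn|n Bn].
- rewrite (_ : shiftop R 0 = shiftop R (-1 + 1)) // -opmul_V_shiftop -Vinvop_shiftop.
  exact: Bset_mul Bset_V Bset_Vinv.
- by rewrite intS addrC -opmul_V_shiftop; exact: Bset_mul Bset_V Bn.
- by rewrite intS opprD addrC -opmul_Vinv_shiftop; exact: Bset_mul Bset_Vinv Bn.
Qed.

End GeneratedAlgebras.

Section Gauge.
Variable R : realType.

Lemma expiD (a b : R) : expi a * expi b = expi (a + b).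
Proof. by rewrite /expi cosD sinD [LHS]/GRing.mul /=; congr (_ +i* _)%C; exact: addrC. Qed.

Lemma expi0 : expi (0 : R) = 1.
Proof. by rewrite /expi cos0 sin0. Qed.

Lemma gauge_entry (a b : R) (T : op R) k l :
  opmul (opmul (Uop a) T) (Uop b) k l = expi (a * k%:~R + b * l%:~R) * T k l.
Proof.
rewrite (opmul_diagr (fun l => expi (b * l%:~R))) (opmul_diagl (fun l => expi (a * l%:~R))).
by rewrite mulrAC expiD.
Qed.

End Gauge.

Section Extension.
Variables (R : realType) (G : topologicalZmodType) (x1 : G).
Hypothesis x1_dense : closure (range (fun n : int => x1 *~ n)) = [set: G].
Variable d : (G -> CC R) -> G -> CC R.
Hypothesis d_der : is_F_derivation d.
Hypothesis d_rot : forall f, Fspan f -> d f \o phiG x1 = d (f \o phiG x1).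
Implicit Types (S T : op R) (F : int -> G -> CC R) (u : int -> CC R).

Definition sampled_by u (f : G -> CC R) := Fspan f /\ forall k, u k = f (x1 *~ k).

(* The [n]-th diagonal of [T], sampled from some [f] in [Fspan], is replaced by
   [d f] sampled along the orbit; [f] is unique by density of the orbit.  On
   operators that are not [Fbanded] the value is junk. *)
Definition delta_d T : op R :=
  fun k l => d (get (sampled_by (fun m => T m (m - (k - l))))) (x1 *~ k).

Lemma delta_d_symbol F T : (forall n, Fspan (F n)) -> symbol_of x1 F T ->
  symbol_of x1 (fun n => d (F n)) (delta_d T).
Proof.
move=> FF eT k l; rewrite /delta_d.
have Fkl : sampled_by (fun m => T m (m - (k - l))) (F (k - l)).
  by split=> // m; rewrite eT; congr (F _ _); lia.
have [gF eg] := getPex (ex_intro _ _ Fkl); congr (d _ _).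
by apply: (Fspan_orbit_inj x1_dense) => // m; rewrite -eg -Fkl.2.
Qed.

Lemma banded_delta_d B T : banded B T -> Fbanded x1 T -> banded B (delta_d T).
Proof.
move=> bT [_ [_ [F FF eT]]] k l kl; rewrite (delta_d_symbol FF eT).
suff -> : F (k - l) = fun _ => 0 by rewrite (d0 d_der).
apply: (Fspan_orbit_inj x1_dense) => // [|m]; first exact: Fspan0.
have E : m - (m - (k - l)) = k - l by lia.
by rewrite -E -eT bT // E.
Qed.

Lemma delta_d_linear c S T : Fbanded x1 S -> Fbanded x1 T ->
  delta_d (opadd (opscale c S) T) = opadd (opscale c (delta_d S)) (delta_d T).
Proof.
move=> [_ [_ [F1 F1F eS]]] [_ [_ [F2 F2F eT]]]; apply: op_ext => k l.
have FF (n : int) : Fspan (fun x => c * F1 n x + F2 n x) by apply/FspanD/F2F/FspanZ.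
rewrite (delta_d_symbol FF (symbol_add (symbol_scale c eS) eT)) (d_linear d_der) //.
by rewrite /opadd /opscale (delta_d_symbol F1F eS) (delta_d_symbol F2F eT).
Qed.

(* Diagonalwise this is the Leibniz rule for [d], once [d] is known to commute
   with the translations by [x_j] occurring in [symbol_mul]. *)
Lemma delta_d_mul S T : Fbanded x1 S -> Fbanded x1 T ->
  delta_d (opmul S T) = opadd (opmul (delta_d S) T) (opmul S (delta_d T)).
Proof.
move=> FbS [_ [_ [F2 F2F eT]]]; have [B [bS [F1 F1F eS]]] := FbS.
have F2tr j n : Fspan (fun x => F2 n (x + x1 *~ j)) by exact: Fspan_translate.
have FF (n : int) : Fspan (fun x => \sum_(j <- zwin B) F1 j x * F2 (n - j) (x + x1 *~ (- j))).
  by apply: Fspan_sum => j _; exact: FspanM.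
apply: op_ext => k l.
rewrite (delta_d_symbol FF (symbol_mul bS eS eT)) /opadd.
rewrite (symbol_mul (banded_delta_d bS FbS) (delta_d_symbol F1F eS) eT).
rewrite (symbol_mul bS eS (delta_d_symbol F2F eT)) -big_split (d_sum d_der) /=; last first.
  by move=> j _; exact: FspanM.
apply: eq_bigr => j _; rewrite (dM d_der) //.
by rewrite (commutes_translate_orbit d_rot).
Qed.

Lemma delta_d_M f : Fspan f -> delta_d (Mop x1 f) = Mop x1 (d f).
Proof.
move=> fF; have FF (n : int) : Fspan (fun x => (n == 0)%:R * f x) by exact: FspanZ.
apply: op_ext => k l.
by rewrite (delta_d_symbol FF (symbol_M x1 f)) (dZ d_der) // symbol_M.
Qed.

Lemma delta_d_shiftop (n0 : int) : delta_d (shiftop R n0) = op0 R.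
Proof.
have FF (n : int) : Fspan (fun _ : G => (n == n0)%:R : CC R) by exact: FspanC.
by apply: op_ext => k l; rewrite (delta_d_symbol FF (fun _ _ => erefl)) (dC d_der).
Qed.

Lemma Bset_delta_d T : Fbanded x1 T -> Bset x1 (delta_d T).
Proof.
move=> FbT; have [B [bT [F FF eT]]] := FbT.
have -> : delta_d T =
    (fun k l => \sum_(n <- zwin B) opmul (Mop x1 (d (F n))) (shiftop R n) k l).
  apply: op_ext => k l; under eq_bigr do rewrite (opmul_diagl (fun l => d (F _) (x1 *~ l))).
  have [klB|klB] := boolP (k - l \in zwin B).
    rewrite (bigD1_seq (k - l)) ?zwin_uniq //= /shiftop eqxx mulr1 big1 ?addr0.
      exact: (delta_d_symbol FF eT).
    by move=> n /negbTE; rewrite eq_sym => ->; rewrite mulr0.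
  rewrite (banded_delta_d bT FbT) //; symmetry.
  apply: big1_seq => n /andP [_ nB]; rewrite /shiftop.
  by case: eqP => [kln|_]; [rewrite kln nB in klB|rewrite mulr0].
apply: Bset_sum => n _; apply: Bset_mul.
  by apply: Bset_M; exact: d_continuous.
exact: Bset_shiftop.
Qed.

Lemma delta_d_invariant (th : R) T : Fbanded x1 T ->
  opmul (opmul (Uop (- th)) (delta_d (opmul (opmul (Uop th) T) (Uop (- th)))))
        (Uop th) = delta_d T.
Proof.
move=> [_ [_ [F FF eT]]].
have eT' : symbol_of x1 (fun n x => expi (th * n%:~R) * F n x)
                        (opmul (opmul (Uop th) T) (Uop (- th))).
  by move=> k l; rewrite gauge_entry eT intrB; congr (expi _ * _); lra.
have FF' (n : int) : Fspan (fun x => expi (th * n%:~R) * F n x) by exact: FspanZ.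
apply: op_ext => k l; rewrite gauge_entry (delta_d_symbol FF' eT') (dZ d_der) //.
rewrite (delta_d_symbol FF eT) mulrA expiD intrB.
have -> : - th * k%:~R + th * l%:~R + th * (k%:~R - l%:~R) = 0 by lra.
by rewrite expi0 mul1r.
Qed.

Lemma delta_d_is_B_derivation : is_B_derivation x1 delta_d.
Proof.
split=> [T /Bcal_Fbanded|c S T /Bcal_Fbanded FbS /Bcal_Fbanded FbT|
         S T /Bcal_Fbanded FbS /Bcal_Fbanded FbT].
- exact: Bset_delta_d.
- exact: delta_d_linear.
- exact: delta_d_mul.
Qed.

Lemma delta_d_is_invariant : is_invariant x1 delta_d.
Proof. by move=> th T /Bcal_Fbanded; exact: delta_d_invariant. Qed.

End Extension.

Section Uniqueness.
Variables (R : realType) (G : topologicalZmodType) (x1 : G).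
Implicit Types (S T : op R) (c : CC R).

Section BDerivation.
Variable delta : op R -> op R.
Hypothesis deltaB : is_B_derivation x1 delta.

Lemma B_derivation_linear c S T : Bcal x1 S -> Bcal x1 T ->
  delta (opadd (opscale c S) T) = opadd (opscale c (delta S)) (delta T).
Proof. by case: deltaB => _ dL _; exact: dL. Qed.

Lemma B_derivation_mul S T : Bcal x1 S -> Bcal x1 T ->
  delta (opmul S T) = opadd (opmul (delta S) T) (opmul S (delta T)).
Proof. by case: deltaB => _ _ dM; exact: dM. Qed.

Lemma B_derivation_add S T : Bcal x1 S -> Bcal x1 T ->
  delta (opadd S T) = opadd (delta S) (delta T).
Proof. by move=> SB TB; have := B_derivation_linear 1 SB TB; rewrite !opscale1. Qed.

Lemma B_derivation0 : delta (op0 R) = op0 R.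
Proof. by apply: opadd_eq_idem; rewrite -B_derivation_add ?opadd0 //; exact: Bcal_op0. Qed.

Lemma B_derivation_scale c T : Bcal x1 T -> delta (opscale c T) = opscale c (delta T).
Proof.
move=> TB; have := B_derivation_linear c TB (Bcal_op0 (x1 := x1)).
by rewrite !opadd0 B_derivation0 opadd0.
Qed.

Lemma B_derivation_Vinv : delta (Vop R) = op0 R -> delta (Vinvop R) = op0 R.
Proof.
move=> dV; have VB := Bcal_V (x1 := x1); have ViB := Bcal_Vinv (x1 := x1).
have IB : Bcal x1 (op1 R) by rewrite -opmul_V_Vinv; exact: Bcal_mul.
have dI : delta (op1 R) = op0 R.
  by have := B_derivation_mul IB IB; rewrite !opmul1l opmul1r => /esym /opadd_eq_idem.
move: dI; rewrite -opmul_V_Vinv B_derivation_mul // dV opmul0l => dVVi.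
apply: op_ext => k l; have := congr1 (fun X => X (k + 1) l) dVVi.
by rewrite /opadd /op0 opmul_Vl addrK add0r.
Qed.

End BDerivation.

(* Agreement on adjoints is carried along the induction: the generating
   operations include [opadj], with which a derivation need not commute. *)
Lemma B_derivation_unique (delta1 delta2 : op R -> op R) :
  is_B_derivation x1 delta1 -> is_B_derivation x1 delta2 ->
  delta1 (Vop R) = delta2 (Vop R) -> delta1 (Vinvop R) = delta2 (Vinvop R) ->
  (forall chi, is_char chi -> delta1 (Mop x1 chi) = delta2 (Mop x1 chi)) ->
  forall T, Bcal x1 T -> delta1 T = delta2 T.
Proof.
move=> d1 d2 eV eVi eM T TB.
pose P T := [/\ Bcal x1 T, delta1 T = delta2 T & delta1 (opadj T) = delta2 (opadj T)].
suff [] : P T by [].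
apply: TB; first split.
- move=> S U [SB eS eSa] [UB eU eUa]; have Sa := Bcal_adj SB; have Ua := Bcal_adj UB.
  split; first exact: Bcal_add.
    by rewrite (B_derivation_add d1) // (B_derivation_add d2) // eS eU.
  by rewrite opadj_add (B_derivation_add d1) // (B_derivation_add d2) // eSa eUa.
- move=> c S [SB eS eSa]; have Sa := Bcal_adj SB.
  split; first exact: Bcal_scale.
    by rewrite (B_derivation_scale d1) // (B_derivation_scale d2) // eS.
  by rewrite opadj_scale (B_derivation_scale d1) // (B_derivation_scale d2) // eSa.
- move=> S U [SB eS eSa] [UB eU eUa]; have Sa := Bcal_adj SB; have Ua := Bcal_adj UB.
  split; first exact: Bcal_mul.
    by rewrite (B_derivation_mul d1) // (B_derivation_mul d2) // eS eU.
  have [B [bS _]] := Bcal_Fbanded SB.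
  by rewrite (opadj_mul _ bS) (B_derivation_mul d1) // (B_derivation_mul d2) // eSa eUa.
- by move=> S [SB eS eSa]; split; rewrite ?opadjK //; exact: Bcal_adj.
- by split; [exact: Bcal_V|exact: eV|rewrite opadj_V].
- by split; [exact: Bcal_Vinv|exact: eVi|rewrite -opadj_V opadjK].
- move=> chi chiC; split; first exact: Bcal_M.
    exact: eM.
  by rewrite opadj_M; apply/eM/is_charJ.
Qed.

End Uniqueness.

Theorem lemma3p10 (R : realType) (G : topologicalZmodType) (x1 : G)
  (G_compact : compact [set: G]) (G_hausdorff : hausdorff_space G)
  (G_infinite : infinite_set [set: G])
  (x1_dense : closure (range (fun n : int => x1 *~ n)) = [set: G])
  (d : (G -> CC R) -> (G -> CC R))
  (d_der : is_F_derivation d)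
  (d_rot : forall f, Fspan f -> d f \o phiG x1 = d (f \o phiG x1)) :
  exists delta : op R -> op R,
    (is_B_derivation x1 delta /\
     delta (Vop R) = op0 R /\
     (forall f, Fspan f -> delta (Mop x1 f) = Mop x1 (d f)) /\
     is_invariant x1 delta) /\
    (forall delta' : op R -> op R,
       is_B_derivation x1 delta' ->
       delta' (Vop R) = op0 R ->
       (forall f, Fspan f -> delta' (Mop x1 f) = Mop x1 (d f)) ->
       forall b, Bcal x1 b -> delta' b = delta b).
Proof.
have deltaB := delta_d_is_B_derivation x1_dense d_der d_rot.
have deltaV : delta_d x1 d (Vop R) = op0 R by rewrite Vop_shiftop; exact: delta_d_shiftop.
have deltaM f : Fspan f -> delta_d x1 d (Mop x1 f) = Mop x1 (d f).
  exact: (delta_d_M x1_dense d_der).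
exists (delta_d x1 d); split.
  by do !split=> //; exact: (delta_d_is_invariant x1_dense d_der).
move=> delta' delta'B delta'V delta'M T TB; apply: (B_derivation_unique delta'B deltaB) => //.
- by rewrite deltaV delta'V.
- by rewrite (B_derivation_Vinv delta'B delta'V) (B_derivation_Vinv deltaB deltaV).
- by move=> chi /Fspan_char chiF; rewrite delta'M ?deltaM.
Qed.
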